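(* Let $\mathbb{A}$ and $\mathbb{B}$ be small finitely complete categories and let $L \dashv F \colon \mathbb{A} \to \mathbb{B}$ be a reflection (i.e. $F\colon\mathbb{A}\to\mathbb{B}$ fully faithful with left adjoint $L$) such that $L$ preserves finite products, $\mathbb{B}$ is locally cartesian closed, and $\mathbb{A}$ is not locally cartesian closed. Let $L^\ast\colon\widehat{\mathbb{A}}\to\widehat{\mathbb{B}}$ be restriction along $L$, with left adjoint $L_!$ and right adjoint $L_\ast$ (left and right Kan extension along $L$). Then the geometric morphism $L^\ast \dashv L_\ast \colon \widehat{\mathbb{B}} \to \widehat{\mathbb{A}}$ is essential and local but not locally connected, i.e. $L^\ast$ does not preserve dependent products (right adjoints to pullback functors), although the left adjoint $L_!$ of $L^\ast$ preserves finite products, i.e. the full subcategory of $\widehat{\mathbb{B}}$ given by the image of $\widehat{\mathbb{A}}$ under $L^\ast$ is an exponential ideal.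
   Context: For a small category $\mathbb{C}$, $\widehat{\mathbb{C}}$ denotes the presheaf topos $\mathbf{Set}^{\mathbb{C}^{op}}$. A geometric morphism $F'\dashv U'\colon\mathcal{E}\to\mathcal{S}$ is essential if the inverse image $F'$ has a left adjoint; it is local if $F'$ is fully faithful and $U'$ has a right adjoint. It is locally connected if $F'$ has a left adjoint $L'$ such that $L'\dashv F'$ is stably Frobenius: for every pullback square in $\mathcal{E}$ with sides $f\colon B\to A$, $b \colon B \to F'J$, $a\colon A\to F'I$, $F'u\colon F'J\to F'I$ (with $u\colon J\to I$ in $\mathcal{S}$), the square with sides $L'f$, $\widehat b\colon L'B\to J$, $\widehat a\colon L'A\to I$, $u$ is a pullback in $\mathcal{S}$, where $\widehat a,\widehat b$ are adjoint transposes; equivalently, $F'$ preserves dependent products. A full subcategory of a cartesian closed category is an exponential ideal if $Y^X$ lies in it whenever $Y$ does, for arbitrary $X$. *)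

From Stdlib Require Import ProofIrrelevance FunctionalExtensionality.

Set Universe Polymorphism.
Set Polymorphic Inductive Cumulativity.
Set Implicit Arguments.
Unset Strict Implicit.

Record Category@{o h} := {
  Obj :> Type@{o};
  Hom : Obj -> Obj -> Type@{h};
  idm : forall a, Hom a a;
  comp : forall a b c, Hom b c -> Hom a b -> Hom a c;
  comp_idl : forall a b (f : Hom a b), comp (idm b) f = f;
  comp_idr : forall a b (f : Hom a b), comp f (idm a) = f;
  comp_assoc : forall a b c d (f : Hom a b) (g : Hom b c) (h : Hom c d),
      comp h (comp g f) = comp (comp h g) f }.

Arguments Hom {_} a b.
Arguments idm {_} a.
Arguments comp {_ a b c} g f.
Notation "g ∘ f" := (comp g f) (at level 40, left associativity).

Definition op (C : Category) : Category.
Proof.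
  refine {| Obj := Obj C; Hom a b := @Hom C b a; idm a := idm a;
            comp a b c g f := f ∘ g |}.
  - intros; apply comp_idr.
  - intros; apply comp_idl.
  - intros; symmetry; apply comp_assoc.
Defined.

Definition TypeCat : Category.
Proof.
  refine {| Obj := Type; Hom a b := a -> b; idm a := fun x => x;
            comp a b c g f := fun x => g (f x) |}; reflexivity.
Defined.

Record Functor (C D : Category) := {
  fobj :> C -> D;
  fmap : forall a b, Hom a b -> Hom (fobj a) (fobj b);
  fmap_id : forall a, fmap (idm a) = idm (fobj a);
  fmap_comp : forall a b c (f : Hom a b) (g : Hom b c),
      fmap (g ∘ f) = fmap g ∘ fmap f }.
Arguments fmap {C D} _ {a b} f.

Definition FComp (C D E : Category) (G : Functor D E) (F : Functor C D)
  : Functor C E.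
Proof.
  refine {| fobj c := G (F c); fmap a b f := fmap G (fmap F f) |}.
  - intros; rewrite !fmap_id; reflexivity.
  - intros; rewrite !fmap_comp; reflexivity.
Defined.

Definition FOp (C D : Category) (F : Functor C D) : Functor (op C) (op D).
Proof.
  refine (@Build_Functor (op C) (op D) (fun c => F c)
            (fun a b (f : @Hom C b a) => @fmap _ _ F b a f) _ _).
  - intros; apply (fmap_id F).
  - intros; apply (fmap_comp F).
Defined.

Record NatTrans (C D : Category) (F G : Functor C D) := {
  ntc :> forall c, Hom (F c) (G c);
  ntnat : forall a b (f : Hom a b), ntc b ∘ fmap F f = fmap G f ∘ ntc a }.

Lemma nt_eq (C D : Category) (F G : Functor C D) (s t : NatTrans F G) :
  ntc s = ntc t -> s = t.
Proof.
  destruct s as [s Hs], t as [t Ht]; simpl; intros E; subst.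
  f_equal; apply proof_irrelevance.
Qed.

Definition nt_id (C D : Category) (F : Functor C D) : NatTrans F F.
Proof.
  refine {| ntc c := idm (F c) |}.
  intros; rewrite comp_idl, comp_idr; reflexivity.
Defined.

Definition nt_comp (C D : Category) (F G H : Functor C D)
  (t : NatTrans G H) (s : NatTrans F G) : NatTrans F H.
Proof.
  refine {| ntc c := t c ∘ s c |}.
  intros a b f.
  rewrite <- comp_assoc, (ntnat s), comp_assoc, (ntnat t), <- comp_assoc.
  reflexivity.
Defined.

Definition FunCat (C D : Category) : Category.
Proof.
  refine {| Obj := Functor C D; Hom := @NatTrans C D;
            idm := @nt_id C D; comp := @nt_comp C D |}.
  - intros; apply nt_eq; simpl; apply functional_extensionality_dep;
      intro; apply comp_idl.
  - intros; apply nt_eq; simpl; apply functional_extensionality_dep;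
      intro; apply comp_idr.
  - intros; apply nt_eq; simpl; apply functional_extensionality_dep;
      intro; apply comp_assoc.
Defined.

Definition Psh@{i j jp | i <= j, j < jp +} (C : Category@{i i}) : Category@{jp j}
  := FunCat (op C) TypeCat@{jp j}.

Definition restr@{i j jp | i <= j, j < jp +} (B A : Category@{i i}) (L : Functor B A)
  : Functor (Psh@{i j jp} A) (Psh@{i j jp} B).
Proof.
  unshelve refine (@Build_Functor (Psh@{i j jp} A) (Psh@{i j jp} B)
            (fun P : Functor (op A) TypeCat => FComp P (FOp L))
            (fun P Q (s : NatTrans P Q) =>
               @Build_NatTrans (op B) TypeCat (FComp P (FOp L)) (FComp Q (FOp L))
                 (fun b => ntc s (L b)) _) _ _).
  - intros a b f; exact (ntnat s (fmap L f)).
  - intros; apply nt_eq; reflexivity.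
  - intros; apply nt_eq; reflexivity.
Defined.

Record Adjunction (C D : Category) (F : Functor C D) (G : Functor D C) := {
  adj_unit : forall c, Hom c (G (F c));
  adj_counit : forall d, Hom (F (G d)) d;
  adj_unit_nat : forall c c' (f : Hom c c'),
      fmap G (fmap F f) ∘ adj_unit c = adj_unit c' ∘ f;
  adj_counit_nat : forall d d' (g : Hom d d'),
      g ∘ adj_counit d = adj_counit d' ∘ fmap F (fmap G g);
  adj_tri1 : forall c, adj_counit (F c) ∘ fmap F (adj_unit c) = idm (F c);
  adj_tri2 : forall d, fmap G (adj_counit d) ∘ adj_unit (G d) = idm (G d) }.

Definition fully_faithful (C D : Category) (F : Functor C D) : Prop :=
  forall a b, exists g : Hom (F a) (F b) -> Hom a b,
    (forall f, g (fmap F f) = f) /\ (forall h, fmap F (g h) = h).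

Definition is_terminal (C : Category) (t : C) : Prop :=
  forall a : C, exists! f : Hom a t, True.

Definition is_product (C : Category) (p x y : C) (p1 : Hom p x) (p2 : Hom p y)
  : Prop :=
  forall q (q1 : Hom q x) (q2 : Hom q y),
    exists! h : Hom q p, p1 ∘ h = q1 /\ p2 ∘ h = q2.

Definition is_pullback (C : Category) (P X Y Z : C)
  (p1 : Hom P X) (p2 : Hom P Y) (f : Hom X Z) (g : Hom Y Z) : Prop :=
  f ∘ p1 = g ∘ p2 /\
  forall Q (q1 : Hom Q X) (q2 : Hom Q Y), f ∘ q1 = g ∘ q2 ->
    exists! h : Hom Q P, p1 ∘ h = q1 /\ p2 ∘ h = q2.

Definition has_pullbacks (C : Category) : Prop :=
  forall (X Y Z : C) (f : Hom X Z) (g : Hom Y Z),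
    exists P (p1 : Hom P X) (p2 : Hom P Y), is_pullback p1 p2 f g.

Definition finitely_complete (C : Category) : Prop :=
  (exists t : C, is_terminal t) /\ has_pullbacks C.

Definition preserves_finite_products (C D : Category) (F : Functor C D) : Prop :=
  (forall t : C, is_terminal t -> is_terminal (F t)) /\
  (forall (p x y : C) (p1 : Hom p x) (p2 : Hom p y),
      is_product p1 p2 -> is_product (fmap F p1) (fmap F p2)).

(** A dependent product of  p : x -> a  along  f : a -> b  is the value at p
    of a right adjoint to the pullback functor  f^* : C/b -> C/a, given by its
    universal arrow: an object  q : y -> b  over b together with the counit
    eps : f^*(y) -> x  over a, such that every  e : f^*(z) -> x  over a
    factors as  eps o f^*(h)  for a unique  h : z -> y  over b. *)
Definition has_dependent_product (C : Category) (a b x : C)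
  (f : Hom a b) (p : Hom x a) : Prop :=
  exists (y : C) (q : Hom y b) (P : C) (pi1 : Hom P y) (pi2 : Hom P a)
         (eps : Hom P x),
    is_pullback pi1 pi2 q f /\ p ∘ eps = pi2 /\
    forall (z : C) (r : Hom z b) (Q : C) (rho1 : Hom Q z) (rho2 : Hom Q a)
           (e : Hom Q x),
      is_pullback rho1 rho2 r f -> p ∘ e = rho2 ->
      exists! h : Hom z y, q ∘ h = r /\
        forall k : Hom Q P, pi1 ∘ k = h ∘ rho1 -> pi2 ∘ k = rho2 -> eps ∘ k = e.

Definition locally_cartesian_closed (C : Category) : Prop :=
  has_pullbacks C /\
  forall (a b x : C) (f : Hom a b) (p : Hom x a), has_dependent_product f p.

Definition essential (S E : Category) (Finv : Functor S E) : Prop :=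
  exists L' : Functor E S, inhabited (Adjunction L' Finv).

Definition local (S E : Category) (Finv : Functor S E) (Udir : Functor E S)
  : Prop :=
  fully_faithful Finv /\ exists R : Functor S E, inhabited (Adjunction Udir R).

Definition transpose (S E : Category) (L' : Functor E S) (Finv : Functor S E)
  (adj : Adjunction L' Finv) (A0 : E) (I : S) (a : Hom A0 (Finv I))
  : Hom (L' A0) I :=
  adj_counit adj I ∘ fmap L' a.

Definition stably_frobenius (S E : Category) (L' : Functor E S)
  (Finv : Functor S E) (adj : Adjunction L' Finv) : Prop :=
  forall (B0 A0 : E) (J I : S) (f : Hom B0 A0) (b : Hom B0 (Finv J))
         (a : Hom A0 (Finv I)) (u : Hom J I),
    is_pullback f b a (fmap Finv u) ->
    is_pullback (fmap L' f) (transpose adj b) (transpose adj a) u.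

Definition locally_connected (S E : Category) (Finv : Functor S E) : Prop :=
  exists (L' : Functor E S) (adj : Adjunction L' Finv), stably_frobenius adj.

(* From L -| F one gets restr L -| restr F -| Ran_F and Lan_L -| restr L, and restr L is
   fully faithful because the counit L F => 1 of the reflection is invertible.
   Lan_L preserves finite products because L does: elements (b, a -> L b, x in Q b) and
   (b', a -> L b', y in Q' b') of two colimits are paired over b x b'.
   Any left adjoint of restr L sends yo b to yo (L b). If it were stably Frobenius, it would
   send the pullback of presheaves on B formed by a dependent product of F p along F f and
   the transposes of its legs to a pullback of representables, i.e. L would preserve that
   pullback. Then the reflection of the dependent product is a dependent product of p along f
   in A, so A would be locally cartesian closed. *)

From Stdlib Require Import ProofIrrelevance FunctionalExtensionality ClassicalEpsilon
  PropExtensionality Relations.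
Set Universe Polymorphism.
Set Implicit Arguments.
Unset Strict Implicit.

Definition witness {T : Type} {P : T -> Prop} (H : exists x, P x) : T :=
  proj1_sig (constructive_indefinite_description P H).

Lemma witness_spec {T : Type} {P : T -> Prop} (H : exists x, P x) : P (witness H).
Proof. unfold witness. destruct (constructive_indefinite_description P H); auto. Qed.

Lemma ex_of_unique {T : Type} {P : T -> Prop} : (exists! x, P x) -> exists x, P x.
Proof. intros [x [H _]]; eauto. Qed.

Ltac reassoc := repeat rewrite <- comp_assoc.

Lemma comp_eq_precomp (C : Category) (a b c d : C) (g : Hom b c) (f : Hom a b)
  (h : Hom a c) (k : Hom d a) :
  g ∘ f = h -> g ∘ (f ∘ k) = h ∘ k.
Proof. intros <-. apply comp_assoc. Qed.

Lemma fmap_comp_assoc (C D : Category) (G : Functor C D) (a b c : C) (d : D)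
  (f : Hom a b) (g : Hom b c) (k : Hom d (G a)) :
  fmap G g ∘ (fmap G f ∘ k) = fmap G (g ∘ f) ∘ k.
Proof. rewrite fmap_comp. apply comp_assoc. Qed.

Section Pullbacks.
Context (C : Category) (P X Y Z : C) (p1 : Hom P X) (p2 : Hom P Y)
  (f : Hom X Z) (g : Hom Y Z).

Lemma pullback_hom_ext (H : is_pullback p1 p2 f g) Q (k k' : Hom Q P) :
  p1 ∘ k = p1 ∘ k' -> p2 ∘ k = p2 ∘ k' -> k = k'.
Proof.
  intros E1 E2. destruct H as [Hc Hu].
  assert (Hk' : f ∘ (p1 ∘ k') = g ∘ (p2 ∘ k')) by (rewrite !comp_assoc, Hc; reflexivity).
  destruct (Hu Q _ _ Hk') as [h [_ Hh]].
  rewrite <- (Hh k), <- (Hh k'); auto.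
Qed.

Lemma pullback_factor (H : is_pullback p1 p2 f g) Q (q1 : Hom Q X) (q2 : Hom Q Y) :
  f ∘ q1 = g ∘ q2 -> exists k : Hom Q P, p1 ∘ k = q1 /\ p2 ∘ k = q2.
Proof.
  intros E. destruct H as [_ Hu]. destruct (Hu Q q1 q2 E) as [h [Hh _]]. eauto.
Qed.

Lemma is_pullback_intro :
  f ∘ p1 = g ∘ p2 ->
  (forall Q (q1 : Hom Q X) (q2 : Hom Q Y), f ∘ q1 = g ∘ q2 ->
     exists k : Hom Q P, p1 ∘ k = q1 /\ p2 ∘ k = q2) ->
  (forall Q (k k' : Hom Q P), p1 ∘ k = p1 ∘ k' -> p2 ∘ k = p2 ∘ k' -> k = k') ->
  is_pullback p1 p2 f g.
Proof.
  intros Hc He Hu. split; auto. intros Q q1 q2 E.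
  destruct (He Q q1 q2 E) as [k [E1 E2]]. exists k. split; auto.
  intros k' [E1' E2']. apply Hu; congruence.
Qed.

End Pullbacks.

Lemma is_pullback_iso (C : Category) (P X Y Z P' X' : C) (p1 : Hom P X) (p2 : Hom P Y)
  (f : Hom X Z) (g : Hom Y Z) (i : Hom P' P) (i' : Hom P P') (j : Hom X' X)
  (j' : Hom X X') (p1' : Hom P' X') (p2' : Hom P' Y) (f' : Hom X' Z) :
  i ∘ i' = idm P -> i' ∘ i = idm P' -> j ∘ j' = idm X -> j' ∘ j = idm X' ->
  j ∘ p1' = p1 ∘ i -> p2' = p2 ∘ i -> f' = f ∘ j ->
  is_pullback p1 p2 f g -> is_pullback p1' p2' f' g.
Proof.
  intros Hii Hi'i Hjj Hj'j E1 E2 E3 H.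
  assert (Ep1 : p1' = j' ∘ p1 ∘ i).
  { rewrite <- comp_assoc, <- E1, comp_assoc, Hj'j, comp_idl. reflexivity. }
  apply is_pullback_intro.
  - rewrite E2, E3, Ep1. reassoc. rewrite (comp_assoc _ j' j), Hjj, comp_idl.
    rewrite comp_assoc, (proj1 H), <- comp_assoc. reflexivity.
  - intros Q q1 q2 E. rewrite E3 in E.
    destruct (pullback_factor H (q1 := j ∘ q1) (q2 := q2)) as [k [K1 K2]].
    { rewrite comp_assoc; auto. }
    exists (i' ∘ k). split.
    + rewrite Ep1. reassoc. rewrite (comp_assoc _ i' i), Hii, comp_idl.
      rewrite K1, comp_assoc, Hj'j, comp_idl. reflexivity.
    + rewrite E2, <- comp_assoc, (comp_assoc _ i' i), Hii, comp_idl. auto.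
  - intros Q k k' K1 K2.
    assert (Ei : i ∘ k = i ∘ k').
    { apply (pullback_hom_ext H).
      - rewrite !comp_assoc, <- E1. reassoc. rewrite K1. reflexivity.
      - rewrite !comp_assoc, <- E2. auto. }
    rewrite <- (comp_idl k), <- (comp_idl k'), <- Hi'i. reassoc. rewrite Ei. reflexivity.
Qed.

Section AdjunctionFacts.
Context (A B : Category) (F : Functor A B) (L : Functor B A) (adj : Adjunction L F).

Definition eta b : Hom b (F (L b)) := adj_unit adj b.
Definition eps a : Hom (L (F a)) a := adj_counit adj a.

Lemma eta_nat b b' (f : Hom b b') : fmap F (fmap L f) ∘ eta b = eta b' ∘ f.
Proof. apply adj_unit_nat. Qed.
Lemma eps_nat a a' (g : Hom a a') : g ∘ eps a = eps a' ∘ fmap L (fmap F g).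
Proof. apply adj_counit_nat. Qed.
Lemma tri1 b : eps (L b) ∘ fmap L (eta b) = idm (L b).
Proof. apply adj_tri1. Qed.
Lemma tri2 a : fmap F (eps a) ∘ eta (F a) = idm (F a).
Proof. apply adj_tri2. Qed.

Lemma unit_transposeK b a (g : Hom b (F a)) : fmap F (eps a ∘ fmap L g) ∘ eta b = g.
Proof.
  rewrite fmap_comp, <- comp_assoc, eta_nat, comp_assoc, tri2, comp_idl. reflexivity.
Qed.

Lemma counit_transposeK b a (g : Hom (L b) a) : eps a ∘ fmap L (fmap F g ∘ eta b) = g.
Proof.
  rewrite fmap_comp, comp_assoc, <- eps_nat, <- comp_assoc, tri1, comp_idr. reflexivity.
Qed.

Lemma unit_transpose_inj b a (g g' : Hom (L b) a) :
  fmap F g ∘ eta b = fmap F g' ∘ eta b -> g = g'.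
Proof. intros E. rewrite <- (counit_transposeK g), <- (counit_transposeK g'), E. reflexivity. Qed.

Lemma counit_transpose_inj b a (g g' : Hom b (F a)) :
  eps a ∘ fmap L g = eps a ∘ fmap L g' -> g = g'.
Proof. intros E. rewrite <- (unit_transposeK g), <- (unit_transposeK g'), E. reflexivity. Qed.

Lemma right_adjoint_preserves_pullbacks (P X Y Z : A) (p1 : Hom P X) (p2 : Hom P Y)
  (f : Hom X Z) (g : Hom Y Z) :
  is_pullback p1 p2 f g -> is_pullback (fmap F p1) (fmap F p2) (fmap F f) (fmap F g).
Proof.
  intros H. apply is_pullback_intro.
  - rewrite <- !fmap_comp, (proj1 H). reflexivity.
  - intros Q q1 q2 E.
    destruct (pullback_factor H (q1 := eps X ∘ fmap L q1) (q2 := eps Y ∘ fmap L q2))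
      as [k [K1 K2]].
    { rewrite !comp_assoc, !eps_nat. reassoc. rewrite <- !fmap_comp, E. reflexivity. }
    exists (fmap F k ∘ eta Q). split.
    + rewrite comp_assoc, <- fmap_comp, K1, unit_transposeK. reflexivity.
    + rewrite comp_assoc, <- fmap_comp, K2, unit_transposeK. reflexivity.
  - intros Q k k' K1 K2. apply counit_transpose_inj. apply (pullback_hom_ext H).
    + rewrite !comp_assoc, !eps_nat. reassoc. rewrite <- !fmap_comp, K1. reflexivity.
    + rewrite !comp_assoc, !eps_nat. reassoc. rewrite <- !fmap_comp, K2. reflexivity.
Qed.

End AdjunctionFacts.

Section Reflection.
Context (A B : Category) (F : Functor A B) (L : Functor B A) (adj : Adjunction L F)
  (hF : fully_faithful F).

Lemma F_faithful a b (f g : Hom a b) : fmap F f = fmap F g -> f = g.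
Proof.
  intros E. destruct (hF a b) as [h [H1 _]]. rewrite <- (H1 f), <- (H1 g), E; auto.
Qed.

Definition ff_inv a b (h : Hom (F a) (F b)) : Hom a b := witness (hF a b) h.

Lemma fmap_ff_inv a b (h : Hom (F a) (F b)) : fmap F (ff_inv h) = h.
Proof. unfold ff_inv. apply (proj2 (witness_spec (hF a b))). Qed.

Lemma unit_epi b a (g1 g2 : Hom (F (L b)) (F a)) : g1 ∘ eta adj b = g2 ∘ eta adj b -> g1 = g2.
Proof.
  intros E. rewrite <- (fmap_ff_inv g1), <- (fmap_ff_inv g2) in *.
  f_equal. apply (unit_transpose_inj E).
Qed.

Definition counit_inv a : Hom a (L (F a)) := ff_inv (eta adj (F a)).

Lemma fmap_counit_inv a : fmap F (counit_inv a) = eta adj (F a).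
Proof. apply fmap_ff_inv. Qed.

Lemma counit_counit_inv a : eps adj a ∘ counit_inv a = idm a.
Proof.
  apply F_faithful. rewrite fmap_comp, fmap_counit_inv, tri2, fmap_id. reflexivity.
Qed.

Lemma counit_inv_counit a : counit_inv a ∘ eps adj a = idm (L (F a)).
Proof.
  apply F_faithful. rewrite fmap_comp, fmap_counit_inv, fmap_id. apply unit_epi.
  rewrite <- comp_assoc, tri2, comp_idr, comp_idl. reflexivity.
Qed.

Lemma counit_mono a X (g g' : Hom X (L (F a))) : eps adj a ∘ g = eps adj a ∘ g' -> g = g'.
Proof.
  intros E. rewrite <- (comp_idl g), <- (comp_idl g'), <- counit_inv_counit.
  reassoc. rewrite E. reflexivity.
Qed.

Lemma counit_inv_nat a a' (u : Hom a a') :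
  counit_inv a' ∘ u = fmap L (fmap F u) ∘ counit_inv a.
Proof.
  apply counit_mono. rewrite comp_assoc, counit_counit_inv, comp_idl.
  rewrite comp_assoc, <- eps_nat. reassoc. rewrite counit_counit_inv, comp_idr. reflexivity.
Qed.

Lemma counit_fmap_counit_inv z a (u : Hom z a) :
  eps adj a ∘ (fmap L (fmap F u) ∘ counit_inv z) = u.
Proof. rewrite <- counit_inv_nat, comp_assoc, counit_counit_inv. apply comp_idl. Qed.

Lemma fmap_L_unit b : fmap L (eta adj b) = counit_inv (L b).
Proof. apply counit_mono. rewrite tri1, counit_counit_inv. reflexivity. Qed.

End Reflection.

Section Presheaves.
Context (C : Category).

Lemma psh_ext (X Y : Psh C) (s t : @Hom (Psh C) X Y) :
  (forall (c : C) (x : X c), ntc s c x = ntc t c x) -> s = t.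
Proof.
  intros H. apply nt_eq. apply functional_extensionality_dep; intro c.
  apply functional_extensionality; intro x. apply H.
Qed.

Lemma ntnat_pt (X Y : Psh C) (s : @Hom (Psh C) X Y) (a b : C) (f : @Hom C b a) (x : X a) :
  ntc s b (@fmap _ _ X a b f x) = @fmap _ _ Y a b f (ntc s a x).
Proof. exact (f_equal (fun h => h x) (ntnat s (a:=a) (b:=b) f)). Qed.

Lemma fmap_id_pt (X : Psh C) (c : C) (x : X c) : @fmap _ _ X c c (idm c) x = x.
Proof. exact (f_equal (fun h => h x) (fmap_id X c)). Qed.

Lemma fmap_comp_pt (X : Psh C) (a b c : C) (f : @Hom C b a) (g : @Hom C c b) (x : X a) :
  @fmap _ _ X a c (f ∘ g) x = @fmap _ _ X b c g (@fmap _ _ X a b f x).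
Proof. exact (f_equal (fun h => h x) (fmap_comp X (a:=a) (b:=b) (c:=c) f g)). Qed.

Lemma nt_comp_pt (X Y Z : Psh C) (s : @Hom (Psh C) X Y) (t : @Hom (Psh C) Y Z) c x :
  ntc (t ∘ s) c x = ntc t c (ntc s c x).
Proof. reflexivity. Qed.

Lemma nt_id_pt (X : Psh C) c x : ntc (idm X) c x = x.
Proof. reflexivity. Qed.

Lemma nt_eq_pt (X Y : Psh C) (s t : @Hom (Psh C) X Y) (E : s = t) c (x : X c) :
  ntc s c x = ntc t c x.
Proof. destruct E; reflexivity. Qed.

Definition yo (c : C) : Psh C.
Proof.
  unshelve refine (@Build_Functor (op C) TypeCat (fun d => @Hom C d c)
    (fun d d' (g : @Hom (op C) d d') (h : @Hom C d c) => h ∘ g) _ _).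
  - intros d. apply functional_extensionality; intro h. exact (@comp_idr C d c h).
  - intros a b d f g. apply functional_extensionality; intro h. simpl.
    exact (@comp_assoc C d b a c g f h).
Defined.

Definition yo_elt (X : Psh C) (c : C) (x : X c) : @Hom (Psh C) (yo c) X.
Proof.
  unshelve refine (@Build_NatTrans (op C) TypeCat (yo c) X
    (fun d (g : @Hom C d c) => @fmap _ _ X c d g x) _).
  intros a b f. apply functional_extensionality; intro g. apply fmap_comp_pt.
Defined.
Arguments yo_elt : clear implicits.

Definition yo_map (c c' : C) (f : @Hom C c c') : @Hom (Psh C) (yo c) (yo c') :=
  yo_elt (yo c') c f.

Lemma yo_map_pt c c' (f : @Hom C c c') d (g : @Hom C d c) : ntc (yo_map f) d g = f ∘ g.
Proof. reflexivity. Qed.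

Lemma yo_elt_pt (X : Psh C) c (x : X c) d (g : @Hom C d c) :
  ntc (yo_elt X c x) d g = @fmap _ _ X c d g x.
Proof. reflexivity. Qed.

Lemma yoneda_ext (X : Psh C) (c : C) (s t : @Hom (Psh C) (yo c) X) :
  ntc s c (idm c) = ntc t c (idm c) -> s = t.
Proof.
  intros E. apply psh_ext. intros d g.
  assert (Hg : g = @fmap _ _ (yo c) c d g (idm c)) by (simpl; rewrite comp_idl; reflexivity).
  rewrite Hg, !ntnat_pt, E. reflexivity.
Qed.

Lemma yo_map_comp (a b c : C) (f : @Hom C a b) (g : @Hom C b c) :
  yo_map g ∘ yo_map f = yo_map (g ∘ f).
Proof. apply psh_ext. intros d h. simpl. apply comp_assoc. Qed.

Lemma yo_elt_comp (X Y : Psh C) (s : @Hom (Psh C) X Y) c (x : X c) :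
  s ∘ yo_elt X c x = yo_elt Y c (ntc s c x).
Proof. apply psh_ext. intros d h. simpl. apply ntnat_pt. Qed.

Lemma yo_map_eq_pt (a b : C) (f g : @Hom C a b) : yo_map f = yo_map g -> f = g.
Proof.
  intros E. pose proof (nt_eq_pt E (idm a)) as Ea. simpl in Ea. rewrite !comp_idr in Ea.
  exact Ea.
Qed.

Lemma yo_reflects_pullbacks (P X Y Z : C) (p1 : Hom P X) (p2 : Hom P Y) (f : Hom X Z)
  (g : Hom Y Z) :
  is_pullback (C:=Psh C) (yo_map p1) (yo_map p2) (yo_map f) (yo_map g) ->
  is_pullback p1 p2 f g.
Proof.
  intros H. apply is_pullback_intro.
  - apply yo_map_eq_pt. rewrite <- !yo_map_comp. exact (proj1 H).
  - intros Q q1 q2 E.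
    destruct (pullback_factor H (q1 := yo_map q1) (q2 := yo_map q2)) as [k [K1 K2]].
    { rewrite !yo_map_comp, E. reflexivity. }
    assert (Ek : k = yo_map (ntc k Q (idm Q))).
    { apply yoneda_ext. simpl. rewrite comp_idr. reflexivity. }
    exists (ntc k Q (idm Q)).
    rewrite Ek, !yo_map_comp in K1, K2. split; apply yo_map_eq_pt; assumption.
  - intros Q k k' K1 K2. apply yo_map_eq_pt.
    apply (pullback_hom_ext H); rewrite !yo_map_comp; congruence.
Qed.

Definition psh_one : Psh C.
Proof.
  unshelve refine (@Build_Functor (op C) TypeCat (fun _ => unit) (fun _ _ _ x => x) _ _);
  reflexivity.
Defined.

Lemma terminal_pt (t : Psh C) : is_terminal t ->
  forall c : C, (exists x : t c, True) /\ (forall x y : t c, x = y).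
Proof.
  intros H c. split.
  - destruct (H psh_one) as [f _]. exists (ntc f c tt). auto.
  - intros x y. destruct (H (yo c)) as [f [_ Hf]].
    pose proof (Hf (yo_elt t c x) I) as E1. pose proof (Hf (yo_elt t c y) I) as E2.
    rewrite E1 in E2. pose proof (nt_eq_pt E2 (idm c)) as E. simpl in E.
    rewrite !fmap_id_pt in E. exact E.
Qed.

Lemma terminal_of_pt (t : Psh C) :
  (forall c : C, (exists x : t c, True) /\ (forall x y : t c, x = y)) -> is_terminal t.
Proof.
  intros H X. unshelve eexists.
  - unshelve refine (@Build_NatTrans (op C) TypeCat X t (fun c _ => witness (proj1 (H c))) _).
    intros a b f. apply functional_extensionality; intro x. apply (proj2 (H b)).
  - split; auto. intros g _. apply psh_ext. intros c x. apply (proj2 (H c)).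
Qed.

Lemma product_pt (p x y : Psh C) (p1 : @Hom (Psh C) p x) (p2 : @Hom (Psh C) p y) :
  is_product p1 p2 -> forall (c : C) (u : x c) (v : y c),
    exists! z : p c, ntc p1 c z = u /\ ntc p2 c z = v.
Proof.
  intros H c u v. destruct (H (yo c) (yo_elt x c u) (yo_elt y c v)) as [h [[H1 H2] Hu]].
  exists (ntc h c (idm c)). split.
  - split.
    + pose proof (nt_eq_pt H1 (idm c)) as E. simpl in E. rewrite fmap_id_pt in E. exact E.
    + pose proof (nt_eq_pt H2 (idm c)) as E. simpl in E. rewrite fmap_id_pt in E. exact E.
  - intros z [Z1 Z2]. assert (E : h = yo_elt p c z).
    { apply Hu. rewrite !yo_elt_comp, Z1, Z2. auto. }
    rewrite E. simpl. apply fmap_id_pt.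
Qed.

Lemma product_of_pt (p x y : Psh C) (p1 : @Hom (Psh C) p x) (p2 : @Hom (Psh C) p y) :
  (forall (c : C) (u : x c) (v : y c), exists! z : p c, ntc p1 c z = u /\ ntc p2 c z = v) ->
  is_product p1 p2.
Proof.
  intros H q q1 q2.
  pose (pair c (w : q c) := witness (ex_of_unique (H c (ntc q1 c w) (ntc q2 c w)))).
  assert (Hpair : forall c w,
             ntc p1 c (pair c w) = ntc q1 c w /\ ntc p2 c (pair c w) = ntc q2 c w).
  { intros c w. apply (witness_spec (ex_of_unique (H c (ntc q1 c w) (ntc q2 c w)))). }
  assert (Huniq : forall c (u : x c) (v : y c) z z', ntc p1 c z = u /\ ntc p2 c z = v ->
                   ntc p1 c z' = u /\ ntc p2 c z' = v -> z = z').
  { intros c u v z z' Hz Hz'. destruct (H c u v) as [z0 [_ U]].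
    rewrite <- (U z Hz), <- (U z' Hz'). reflexivity. }
  unshelve eexists.
  - unshelve refine (@Build_NatTrans (op C) TypeCat q p pair _).
    intros a b f. apply functional_extensionality; intro w. simpl.
    apply (Huniq b (ntc q1 b (@fmap _ _ q a b f w)) (ntc q2 b (@fmap _ _ q a b f w))).
    + apply Hpair.
    + rewrite !ntnat_pt. destruct (Hpair a w) as [-> ->]. auto.
  - split.
    + split; apply psh_ext; intros c w; apply Hpair.
    + intros h' [E1 E2]. apply psh_ext. intros c w. simpl.
      apply (Huniq c (ntc q1 c w) (ntc q2 c w)); [apply Hpair|].
      rewrite <- E1, <- E2. auto.
Qed.

End Presheaves.
Arguments yo_elt {C} X c x.

Section Restriction.
Context (A B : Category) (F : Functor A B) (L : Functor B A) (adj : Adjunction L F).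

Definition restr_adj_unit (P : Psh A) : @Hom (Psh A) P (restr F (restr L P)).
Proof.
  unshelve refine (@Build_NatTrans (op A) TypeCat P (restr F (restr L P))
    (fun a => @fmap _ _ P a (L (F a)) (eps adj a)) _).
  intros a b f. apply functional_extensionality; intro x. cbn.
  rewrite <- !fmap_comp_pt. f_equal. apply eps_nat.
Defined.

Definition restr_adj_counit (Q : Psh B) : @Hom (Psh B) (restr L (restr F Q)) Q.
Proof.
  unshelve refine (@Build_NatTrans (op B) TypeCat (restr L (restr F Q)) Q
    (fun b => @fmap _ _ Q (F (L b)) b (eta adj b)) _).
  intros a b f. apply functional_extensionality; intro x. cbn.
  rewrite <- !fmap_comp_pt. f_equal. exact (eta_nat adj f).
Defined.

Definition restr_adj : Adjunction (restr L) (restr F).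
Proof.
  unshelve refine (@Build_Adjunction _ _ (restr L) (restr F)
                     restr_adj_unit restr_adj_counit _ _ _ _).
  - intros P P' s. apply psh_ext. intros a x. cbn. exact (ntnat_pt s (eps adj a) x).
  - intros Q Q' s. apply psh_ext. intros b x. cbn. exact (ntnat_pt s (eta adj b) x).
  - intros P. apply psh_ext. intros b x. cbn. rewrite <- fmap_comp_pt.
    rewrite (tri1 adj b). apply fmap_id_pt.
  - intros Q. apply psh_ext. intros a x. cbn. rewrite <- fmap_comp_pt.
    rewrite (tri2 adj a). apply fmap_id_pt.
Defined.

Context (hF : fully_faithful F).

Definition restr_ff_inv (P Q : Psh A) (h : @Hom (Psh B) (restr L P) (restr L Q)) :
  @Hom (Psh A) P Q.
Proof.
  unshelve refine (@Build_NatTrans (op A) TypeCat P Q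
    (fun a x => @fmap _ _ Q (L (F a)) a (counit_inv adj hF a)
                  (ntc h (F a) (@fmap _ _ P a (L (F a)) (eps adj a) x))) _).
  intros a b u. apply functional_extensionality; intro x. cbn.
  rewrite <- (fmap_comp_pt (X:=Q)), (counit_inv_nat adj hF u), (fmap_comp_pt (X:=Q)).
  f_equal.
  pose proof (ntnat_pt h (a:=F a) (b:=F b) (fmap F u)
                (@fmap _ _ P a (L (F a)) (eps adj a) x)) as E.
  cbn in E. rewrite <- E. f_equal.
  rewrite <- !fmap_comp_pt. f_equal. exact (eps_nat adj u).
Defined.

Lemma restr_fully_faithful : fully_faithful (restr (B:=B) (A:=A) L).
Proof.
  intros P Q. exists (@restr_ff_inv P Q). split.
  - intros s. apply psh_ext. intros a x. cbn.
    rewrite (ntnat_pt s (eps adj a) x), <- fmap_comp_pt, counit_counit_inv.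
    apply fmap_id_pt.
  - intros h. apply psh_ext. intros b x. cbn.
    rewrite <- fmap_L_unit.
    pose proof (ntnat_pt h (a:=F (L b)) (b:=b) (eta adj b)
                  (@fmap _ _ P _ _ (eps adj (L b)) x)) as E.
    cbn in E. rewrite <- E. f_equal. rewrite <- fmap_comp_pt, (tri1 adj b). apply fmap_id_pt.
Qed.

End Restriction.

Section RightKanExtension.
Context (A B : Category) (F : Functor A B).

(* (Ran_F P)(b) = Hom (restr F (yo b), P), spelled out as a natural family. *)
Local Unset Implicit Arguments.
Record RanElt (P : Psh A) (b : B) := {
  ran_fun : forall a, @Hom B (F a) b -> P a;
  ran_nat : forall a a' (u : @Hom A a' a) (g : @Hom B (F a) b),
      ran_fun a' (g ∘ fmap F u) = @fmap _ _ P a a' u (ran_fun a g) }.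
Arguments ran_fun {P b} r a g.
Arguments ran_nat {P b} r a a' u g.
Local Set Implicit Arguments.

Lemma ran_elt_ext (P : Psh A) b (t t' : RanElt P b) :
  (forall a g, ran_fun t a g = ran_fun t' a g) -> t = t'.
Proof.
  destruct t as [t Ht], t' as [t' Ht']; simpl. intros H.
  assert (t = t').
  { apply functional_extensionality_dep; intro a.
    apply functional_extensionality; intro g. apply H. }
  subst. f_equal. apply proof_irrelevance.
Qed.

Definition ran_elt_restrict (P : Psh A) b b' (v : @Hom B b' b) (t : RanElt P b) :
  RanElt P b'.
Proof.
  refine {| ran_fun a g := ran_fun t a (v ∘ g) |}.
  intros a a' u g. rewrite <- (ran_nat t). f_equal. apply comp_assoc.
Defined.

Definition ran_obj (P : Psh A) : Psh B.
Proof.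
  unshelve refine (@Build_Functor (op B) TypeCat (fun b => RanElt P b)
     (fun b b' (v : @Hom (op B) b b') t => @ran_elt_restrict P b b' v t) _ _).
  - intros b. apply functional_extensionality; intro t. apply ran_elt_ext. intros a g. cbn.
    rewrite comp_idl. reflexivity.
  - intros a b c f g. apply functional_extensionality; intro t.
    apply ran_elt_ext. intros a' h. cbn. f_equal. symmetry. apply comp_assoc.
Defined.

Definition ran_elt_map (P P' : Psh A) (s : @Hom (Psh A) P P') b (t : RanElt P b) :
  RanElt P' b.
Proof.
  refine {| ran_fun a g := ntc s a (ran_fun t a g) |}.
  intros a a' u g. rewrite (ran_nat t). apply ntnat_pt.
Defined.

Definition ran_map (P P' : Psh A) (s : @Hom (Psh A) P P') :
  @Hom (Psh B) (ran_obj P) (ran_obj P').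
Proof.
  unshelve refine (@Build_NatTrans (op B) TypeCat (ran_obj P) (ran_obj P')
                     (@ran_elt_map P P' s) _).
  intros a b f. apply functional_extensionality; intro t. apply ran_elt_ext.
  intros a' g. reflexivity.
Defined.

Definition Ran : Functor (Psh A) (Psh B).
Proof.
  unshelve refine (@Build_Functor (Psh A) (Psh B) ran_obj ran_map _ _).
  - intros P. apply psh_ext. intros b t. apply ran_elt_ext. intros a g. reflexivity.
  - intros P P' P'' s s'. apply psh_ext. intros b t. apply ran_elt_ext. intros a g.
    reflexivity.
Defined.

Definition ran_unit_elt (Q : Psh B) b (x : Q b) : RanElt (restr F Q) b.
Proof.
  refine (@Build_RanElt (restr F Q) b (fun a g => @fmap _ _ Q b (F a) g x) _).
  intros a a' u g. cbn. apply fmap_comp_pt.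
Defined.

Definition ran_unit (Q : Psh B) : @Hom (Psh B) Q (Ran (restr F Q)).
Proof.
  unshelve refine (@Build_NatTrans (op B) TypeCat Q (Ran (restr F Q)) (@ran_unit_elt Q) _).
  intros a b f. apply functional_extensionality; intro x. apply ran_elt_ext.
  intros a' g. cbn. symmetry. apply fmap_comp_pt.
Defined.

Definition ran_counit (P : Psh A) : @Hom (Psh A) (restr F (Ran P)) P.
Proof.
  unshelve refine (@Build_NatTrans (op A) TypeCat (restr F (Ran P)) P
     (fun a (t : RanElt P (F a)) => ran_fun t a (idm (F a))) _).
  intros a b u. apply functional_extensionality; intro t. cbn.
  rewrite <- (ran_nat t), comp_idl, comp_idr. reflexivity.
Defined.

Definition restr_ran_adj : Adjunction (restr F) Ran.
Proof.
  unshelve refine (@Build_Adjunction _ _ (restr F) Ran ran_unit ran_counit _ _ _ _).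
  - intros Q Q' s. apply psh_ext. intros b x. apply ran_elt_ext. intros a g. cbn.
    apply ntnat_pt.
  - intros P P' s. apply psh_ext. intros a t. reflexivity.
  - intros Q. apply psh_ext. intros a x. cbn. apply fmap_id_pt.
  - intros P. apply psh_ext. intros b t. apply ran_elt_ext. intros a g. cbn.
    rewrite comp_idr. reflexivity.
Defined.

End RightKanExtension.

Section Quotient.
Context (T : Type) (R : T -> T -> Prop) (HR : equivalence T R).

Definition quot := {S : T -> Prop | exists t, S = R t}.
Definition qclass (t : T) : quot := exist _ (R t) (ex_intro _ t eq_refl).
Definition qrepr (q : quot) : T := witness (proj2_sig q).

Lemma quot_eq (q q' : quot) : proj1_sig q = proj1_sig q' -> q = q'.
Proof. destruct q, q'; simpl; intros ->; f_equal; apply proof_irrelevance. Qed.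

Lemma qclass_eq t t' : R t t' -> qclass t = qclass t'.
Proof.
  intros H. apply quot_eq. simpl.
  apply functional_extensionality; intro s. apply propositional_extensionality.
  split; intros H'.
  - apply (equiv_trans _ _ HR) with t; auto. apply (equiv_sym _ _ HR); auto.
  - apply (equiv_trans _ _ HR) with t'; auto.
Qed.

Lemma qclass_inj t t' : qclass t = qclass t' -> R t t'.
Proof.
  intros E. apply (f_equal (@proj1_sig _ _)) in E. simpl in E.
  rewrite E. apply (equiv_refl _ _ HR).
Qed.

Lemma qclass_qrepr q : qclass (qrepr q) = q.
Proof.
  apply quot_eq. destruct q as [S HS]. unfold qrepr, qclass. simpl.
  symmetry. apply (witness_spec HS).
Qed.

Lemma qclass_surj q : exists t, q = qclass t.
Proof. exists (qrepr q). symmetry. apply qclass_qrepr. Qed.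

Lemma qrepr_qclass t : R (qrepr (qclass t)) t.
Proof. apply qclass_inj, qclass_qrepr. Qed.

End Quotient.

Lemma clos_rst_map (T U : Type) (R : T -> T -> Prop) (R' : U -> U -> Prop) (f : U -> T) :
  (forall u u', R' u u' -> R (f u) (f u')) ->
  forall u u', clos_refl_sym_trans U R' u u' -> clos_refl_sym_trans T R (f u) (f u').
Proof.
  intros H u u' C. induction C.
  - apply rst_step. auto.
  - apply rst_refl.
  - apply rst_sym. auto.
  - eapply rst_trans; eauto.
Qed.

Lemma clos_rst_fun (T Y : Type) (R : T -> T -> Prop) (f : T -> Y) :
  (forall t t', R t t' -> f t = f t') ->
  forall t t', clos_refl_sym_trans T R t t' -> f t = f t'.
Proof. intros H t t' C. induction C; auto. congruence. Qed.

Section LeftKanExtension.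
Context (A B : Category) (L : Functor B A).

(* (Lan_L Q)(a) is the colimit of Q over the comma category a / L: its elements are
   classes of triples (b, a -> L b, x in Q b), identified along arrows of B. *)
Local Unset Implicit Arguments.
Record LanTerm (Q : Psh B) (a : A) :=
  mkLanTerm { lt_obj : B; lt_arr : @Hom A a (L lt_obj); lt_elt : Q lt_obj }.
Arguments mkLanTerm {Q a} lt_obj lt_arr lt_elt.
Arguments lt_obj {Q a} _.
Arguments lt_arr {Q a} _.
Arguments lt_elt {Q a} _.
Local Set Implicit Arguments.

Definition lan_step (Q : Psh B) a (t t' : LanTerm Q a) : Prop :=
  exists g : @Hom B (lt_obj t') (lt_obj t),
    lt_arr t = fmap L g ∘ lt_arr t' /\
    lt_elt t' = @fmap _ _ Q (lt_obj t) (lt_obj t') g (lt_elt t).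

Definition lan_equiv (Q : Psh B) a := clos_refl_sym_trans (LanTerm Q a) (@lan_step Q a).
Definition lan_class (Q : Psh B) a (t : LanTerm Q a) : quot (@lan_equiv Q a) :=
  qclass (@lan_equiv Q a) t.
Definition lan_repr (Q : Psh B) a (q : quot (@lan_equiv Q a)) : LanTerm Q a := qrepr q.

Lemma lan_equiv_equivalence Q a : equivalence _ (@lan_equiv Q a).
Proof. apply clos_rst_is_equiv. Qed.

Lemma lan_class_step Q a (t t' : LanTerm Q a) : lan_step t t' -> lan_class t = lan_class t'.
Proof. intros H. apply qclass_eq, rst_step, H. apply lan_equiv_equivalence. Qed.

Lemma lan_class_surj Q a (q : quot (@lan_equiv Q a)) : exists t, q = lan_class t.
Proof. apply qclass_surj. Qed.

Lemma lan_repr_class Q a (t : LanTerm Q a) : lan_equiv (lan_repr (lan_class t)) t.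
Proof. apply qrepr_qclass, lan_equiv_equivalence. Qed.

Lemma lan_repr_fun (Q : Psh B) a (Y : Type) (phi : LanTerm Q a -> Y)
  (H : forall t t', lan_step t t' -> phi t = phi t') t :
  phi (lan_repr (lan_class t)) = phi t.
Proof. apply clos_rst_fun with (R := @lan_step Q a); auto. apply lan_repr_class. Qed.

Lemma lan_repr_map (Q Q' : Psh B) a a' (phi : LanTerm Q a -> LanTerm Q' a')
  (H : forall t t', lan_step t t' -> lan_step (phi t) (phi t')) t :
  lan_class (phi (lan_repr (lan_class t))) = lan_class (phi t).
Proof.
  apply qclass_eq; [apply lan_equiv_equivalence|].
  apply clos_rst_map with (R' := @lan_step Q a); auto. apply lan_repr_class.
Qed.

Definition lt_act (Q : Psh B) a a' (h : @Hom A a' a) (t : LanTerm Q a) : LanTerm Q a' :=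
  mkLanTerm (lt_obj t) (lt_arr t ∘ h) (lt_elt t).

Lemma lt_act_step Q a a' (h : @Hom A a' a) t t' :
  @lan_step Q a t t' -> lan_step (lt_act h t) (lt_act h t').
Proof.
  intros [g [E1 E2]]. exists g. simpl. split; auto. rewrite E1. symmetry. apply comp_assoc.
Qed.

Definition lan_restrict (Q : Psh B) a a' (h : @Hom A a' a) (q : quot (@lan_equiv Q a)) :
  quot (@lan_equiv Q a') :=
  lan_class (lt_act h (lan_repr q)).

Lemma lan_restrict_class Q a a' (h : @Hom A a' a) (t : LanTerm Q a) :
  lan_restrict h (lan_class t) = lan_class (lt_act h t).
Proof. apply lan_repr_map. apply lt_act_step. Qed.

Definition lan_obj (Q : Psh B) : Psh A.
Proof.
  unshelve refine (@Build_Functor (op A) TypeCat (fun a => quot (@lan_equiv Q a))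
      (fun a a' (h : @Hom (op A) a a') q => @lan_restrict Q a a' h q) _ _).
  - intros a. apply functional_extensionality; intro q.
    destruct (lan_class_surj q) as [[b f x] ->].
    cbn. rewrite lan_restrict_class. unfold lt_act; simpl. rewrite comp_idr. reflexivity.
  - intros a b c f g. apply functional_extensionality; intro q.
    destruct (lan_class_surj q) as [[b' f' x] ->].
    cbn. rewrite !lan_restrict_class. unfold lt_act; simpl. rewrite comp_assoc. reflexivity.
Defined.

Definition lt_map (Q Q' : Psh B) (s : @Hom (Psh B) Q Q') a (t : LanTerm Q a) : LanTerm Q' a :=
  mkLanTerm (lt_obj t) (lt_arr t) (ntc s (lt_obj t) (lt_elt t)).

Lemma lt_map_step Q Q' (s : @Hom (Psh B) Q Q') a t t' :
  @lan_step Q a t t' -> lan_step (lt_map s t) (lt_map s t').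
Proof.
  intros [g [E1 E2]]. exists g. simpl. split; auto. rewrite E2. apply ntnat_pt.
Qed.

Lemma lt_map_repr_class Q Q' (s : @Hom (Psh B) Q Q') a (t : LanTerm Q a) :
  lan_class (lt_map s (lan_repr (lan_class t))) = lan_class (lt_map s t).
Proof. apply lan_repr_map. apply lt_map_step. Qed.

Definition lan_map (Q Q' : Psh B) (s : @Hom (Psh B) Q Q') :
  @Hom (Psh A) (lan_obj Q) (lan_obj Q').
Proof.
  unshelve refine (@Build_NatTrans (op A) TypeCat (lan_obj Q) (lan_obj Q')
     (fun a q => lan_class (lt_map s (lan_repr q))) _).
  intros a b f. apply functional_extensionality; intro q.
  destruct (lan_class_surj q) as [t ->]. cbn.
  change (lan_class (lt_map s (lan_repr (lan_restrict f (lan_class t)))) =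
          lan_restrict f (lan_class (lt_map s (lan_repr (lan_class t))))).
  rewrite lan_restrict_class, !lt_map_repr_class, lan_restrict_class. reflexivity.
Defined.

Lemma lan_map_class (Q Q' : Psh B) (s : @Hom (Psh B) Q Q') a (t : LanTerm Q a) :
  ntc (lan_map s) a (lan_class t) = lan_class (lt_map s t).
Proof. apply lt_map_repr_class. Qed.

Definition Lan : Functor (Psh B) (Psh A).
Proof.
  unshelve refine (@Build_Functor (Psh B) (Psh A) lan_obj lan_map _ _).
  - intros Q. apply psh_ext. intros a q. destruct (lan_class_surj q) as [t ->].
    rewrite lan_map_class. destruct t; reflexivity.
  - intros Q Q' Q'' s s'. apply psh_ext. intros a q. destruct (lan_class_surj q) as [t ->].
    rewrite nt_comp_pt, !lan_map_class. destruct t; reflexivity.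
Defined.


Lemma Lan_fmap_class (Q Q' : Psh B) (s : @Hom (Psh B) Q Q') a (t : LanTerm Q a) :
  ntc (fmap Lan s) a (lan_class t) = lan_class (lt_map s t).
Proof. apply lan_map_class. Qed.

Definition lan_unit (Q : Psh B) : @Hom (Psh B) Q (restr L (Lan Q)).
Proof.
  unshelve refine (@Build_NatTrans (op B) TypeCat Q (restr L (Lan Q))
     (fun b x => @lan_class Q (L b) (mkLanTerm b (idm (L b)) x)) _).
  intros b b' g. apply functional_extensionality; intro x. cbn.
  change (lan_class (mkLanTerm b' (idm (L b')) (@fmap _ _ Q b b' g x)) =
          lan_restrict (fmap L g) (lan_class (mkLanTerm b (idm (L b)) x))).
  rewrite lan_restrict_class. unfold lt_act; simpl. symmetry. apply lan_class_step.
  exists g. simpl. split; auto. rewrite comp_idl, comp_idr. reflexivity.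
Defined.

Definition lt_eval (P : Psh A) a (t : LanTerm (restr L P) a) : P a :=
  @fmap _ _ P (L (lt_obj t)) a (lt_arr t) (lt_elt t).

Lemma lt_eval_step (P : Psh A) a t t' :
  @lan_step (restr L P) a t t' -> lt_eval t = lt_eval t'.
Proof.
  intros [g [E1 E2]]. unfold lt_eval. rewrite E1, E2. cbn. apply fmap_comp_pt.
Qed.

Lemma lt_eval_repr (P : Psh A) a (t : LanTerm (restr L P) a) :
  lt_eval (lan_repr (lan_class t)) = lt_eval t.
Proof. apply lan_repr_fun, lt_eval_step. Qed.

Definition lan_counit (P : Psh A) : @Hom (Psh A) (Lan (restr L P)) P.
Proof.
  unshelve refine (@Build_NatTrans (op A) TypeCat (Lan (restr L P)) P
     (fun a q => lt_eval (lan_repr q)) _).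
  intros a a' h. apply functional_extensionality; intro q.
  destruct (lan_class_surj q) as [t ->]. cbn.
  change (lt_eval (lan_repr (lan_restrict h (lan_class t))) =
          @fmap _ _ P a a' h (lt_eval (lan_repr (lan_class t)))).
  rewrite lan_restrict_class, !lt_eval_repr.
  unfold lt_eval, lt_act. simpl. apply fmap_comp_pt.
Defined.

Lemma lan_counit_class (P : Psh A) a (t : LanTerm (restr L P) a) :
  ntc (lan_counit P) a (lan_class t) = lt_eval t.
Proof. apply lt_eval_repr. Qed.

Definition lan_adj : Adjunction Lan (restr L).
Proof.
  unshelve refine (@Build_Adjunction _ _ Lan (restr L) lan_unit lan_counit _ _ _ _).
  - intros Q Q' s. apply psh_ext. intros b x.
    change (ntc (fmap Lan s) (L b) (lan_class (mkLanTerm b (idm (L b)) x)) =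
            lan_class (mkLanTerm b (idm (L b)) (ntc s b x))).
    rewrite lan_map_class. reflexivity.
  - intros P P' s. apply psh_ext. intros a q. destruct (lan_class_surj q) as [t ->].
    rewrite !nt_comp_pt, lan_counit_class, lan_map_class, lan_counit_class.
    unfold lt_eval, lt_map. simpl. apply ntnat_pt.
  - intros Q. apply psh_ext. intros a q. destruct (lan_class_surj q) as [t ->].
    rewrite !nt_comp_pt, lan_map_class, lan_counit_class. unfold lt_eval, lt_map. simpl.
    change (lan_restrict (lt_arr t)
              (lan_class (mkLanTerm (lt_obj t) (idm (L (lt_obj t))) (lt_elt t))) =
            lan_class t).
    rewrite lan_restrict_class. unfold lt_act. simpl. rewrite comp_idl.
    destruct t; reflexivity.
  - intros P. apply psh_ext. intros b x. rewrite nt_comp_pt.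
    change (ntc (lan_counit P) (L b) (lan_class (mkLanTerm b (idm (L b)) x)) = x).
    rewrite lan_counit_class. unfold lt_eval. simpl. apply fmap_id_pt.
Defined.

End LeftKanExtension.
Arguments mkLanTerm {A B L Q a} lt_obj lt_arr lt_elt.
Arguments lt_obj {A B L Q a} _.
Arguments lt_arr {A B L Q a} _.
Arguments lt_elt {A B L Q a} _.
Arguments LanTerm {A B} L Q a.

Lemma finitely_complete_products (C : Category) : finitely_complete C ->
  forall b b' : C, exists m (m1 : Hom m b) (m2 : Hom m b'), is_product m1 m2.
Proof.
  intros [[t Ht] Hpb] b b'.
  destruct (ex_of_unique (Ht b)) as [u _], (ex_of_unique (Ht b')) as [u' _].
  destruct (Hpb b b' t u u') as [P [p1 [p2 H]]].
  exists P, p1, p2. intros q q1 q2. apply (proj2 H).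
  destruct (Ht q) as [h [_ U]]. rewrite <- (U (u ∘ q1) I). apply U. exact I.
Qed.

Lemma product_hom_ext (C : Category) (p x y q : C) (p1 : Hom p x) (p2 : Hom p y)
  (k k' : Hom q p) :
  is_product p1 p2 -> p1 ∘ k = p1 ∘ k' -> p2 ∘ k = p2 ∘ k' -> k = k'.
Proof.
  intros H E1 E2. destruct (H q (p1 ∘ k') (p2 ∘ k')) as [h [_ U]].
  rewrite <- (U k (conj E1 E2)). apply U. auto.
Qed.

Section LanFiniteProducts.
Context (A B : Category) (L : Functor B A) (hL : preserves_finite_products L)
  (hB : finitely_complete B).

Lemma Lan_preserves_terminal (t : Psh B) : is_terminal t -> is_terminal (Lan L t).
Proof.
  intros Ht. pose proof (terminal_pt Ht) as Hpt.
  destruct (proj1 hB) as [tB HtB]. pose proof (proj1 hL tB HtB) as HLt.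
  destruct (proj1 (Hpt tB)) as [x1 _].
  assert (Hall : forall (a : A) (q : Lan L t a) (u : Hom a (L tB)),
             q = lan_class (mkLanTerm tB u x1)).
  { intros a q u. destruct (lan_class_surj q) as [[b f x] ->].
    destruct (ex_of_unique (HtB b)) as [bang _].
    assert (Eu : u = fmap L bang ∘ f).
    { destruct (HLt a) as [h [_ U]]. rewrite <- (U u I). apply U. exact I. }
    subst u. symmetry. apply lan_class_step. exists bang. simpl. split; auto.
    apply (proj2 (Hpt b)). }
  apply terminal_of_pt. intros a. destruct (HLt a) as [u _]. split.
  - exists (lan_class (mkLanTerm tB u x1)). auto.
  - intros q q'. rewrite (Hall a q u), (Hall a q' u). reflexivity.
Qed.

Definition bprod (b b' : B) : B := witness (finitely_complete_products hB b b').
Definition bfst b b' : Hom (bprod b b') b :=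
  witness (witness_spec (finitely_complete_products hB b b')).
Definition bsnd b b' : Hom (bprod b b') b' :=
  witness (witness_spec (witness_spec (finitely_complete_products hB b b'))).
Lemma bprod_spec b b' : is_product (bfst b b') (bsnd b b').
Proof. exact (witness_spec (witness_spec (witness_spec (finitely_complete_products hB b b')))). Qed.

Definition bpair q b b' (q1 : Hom q b) (q2 : Hom q b') : Hom q (bprod b b') :=
  witness (ex_of_unique (bprod_spec q1 q2)).
Lemma bpair_spec q b b' (q1 : Hom q b) (q2 : Hom q b') :
  bfst b b' ∘ bpair q1 q2 = q1 /\ bsnd b b' ∘ bpair q1 q2 = q2.
Proof. apply (witness_spec (ex_of_unique (bprod_spec q1 q2))). Qed.

Lemma L_bprod_spec b b' : is_product (fmap L (bfst b b')) (fmap L (bsnd b b')).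
Proof. apply (proj2 hL), bprod_spec. Qed.

Definition Lpair (a : A) b b' (f : Hom a (L b)) (f' : Hom a (L b')) : Hom a (L (bprod b b')) :=
  witness (ex_of_unique (L_bprod_spec f f')).
Lemma Lpair_spec (a : A) b b' (f : Hom a (L b)) (f' : Hom a (L b')) :
  fmap L (bfst b b') ∘ Lpair f f' = f /\ fmap L (bsnd b b') ∘ Lpair f f' = f'.
Proof. apply (witness_spec (ex_of_unique (L_bprod_spec f f'))). Qed.

Section BinaryProduct.
Context (p x y : Psh B) (p1 : @Hom (Psh B) p x) (p2 : @Hom (Psh B) p y)
  (Hp : is_product p1 p2).

Definition psh_pair (c : B) (u : x c) (v : y c) : p c :=
  witness (ex_of_unique (product_pt Hp u v)).
Lemma psh_pair_spec (c : B) (u : x c) (v : y c) :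
  ntc p1 c (psh_pair u v) = u /\ ntc p2 c (psh_pair u v) = v.
Proof. apply (witness_spec (ex_of_unique (product_pt Hp u v))). Qed.
Lemma psh_pair_unique (c : B) (u : x c) (v : y c) z :
  ntc p1 c z = u -> ntc p2 c z = v -> z = psh_pair u v.
Proof.
  intros E1 E2. destruct (product_pt Hp u v) as [z0 [_ U]].
  rewrite <- (U z (conj E1 E2)). apply U, psh_pair_spec.
Qed.

(* The arrow into L (b x b') exists because L preserves this product. *)
Definition lt_pair a (t : LanTerm L x a) (s : LanTerm L y a) : LanTerm L p a :=
  let m := bprod (lt_obj t) (lt_obj s) in
  mkLanTerm m (Lpair (lt_arr t) (lt_arr s))
    (psh_pair (@fmap _ _ x (lt_obj t) m (bfst (lt_obj t) (lt_obj s)) (lt_elt t))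
              (@fmap _ _ y (lt_obj s) m (bsnd (lt_obj t) (lt_obj s)) (lt_elt s))).

Lemma lan_step_refl (Q : Psh B) a (t : LanTerm L Q a) : lan_step t t.
Proof.
  exists (idm _). rewrite fmap_id, comp_idl, fmap_id_pt. auto.
Qed.

Lemma lt_pair_step a (t1 t2 : LanTerm L x a) (s1 s2 : LanTerm L y a) :
  lan_step t1 t2 -> lan_step s1 s2 -> lan_step (lt_pair t1 s1) (lt_pair t2 s2).
Proof.
  intros [g1 [T1 T2]] [g2 [S1 S2]].
  set (m := bprod (lt_obj t2) (lt_obj s2)).
  destruct (bpair_spec (g1 ∘ bfst (lt_obj t2) (lt_obj s2)) (g2 ∘ bsnd (lt_obj t2) (lt_obj s2)))
    as [G1 G2].
  exists (bpair (g1 ∘ bfst (lt_obj t2) (lt_obj s2)) (g2 ∘ bsnd (lt_obj t2) (lt_obj s2))).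
  simpl. split.
  - apply (product_hom_ext (@L_bprod_spec _ _)); rewrite comp_assoc, <- fmap_comp.
    + rewrite G1, fmap_comp, <- comp_assoc, !(proj1 (Lpair_spec _ _)). exact T1.
    + rewrite G2, fmap_comp, <- comp_assoc, !(proj2 (Lpair_spec _ _)). exact S1.
  - symmetry. apply psh_pair_unique.
    + rewrite ntnat_pt, (proj1 (psh_pair_spec _ _)), <- fmap_comp_pt, G1, fmap_comp_pt, T2.
      reflexivity.
    + rewrite ntnat_pt, (proj2 (psh_pair_spec _ _)), <- fmap_comp_pt, G2, fmap_comp_pt, S2.
      reflexivity.
Qed.

Definition lan_pair a (U : Lan L x a) (V : Lan L y a) : Lan L p a :=
  lan_class (lt_pair (lan_repr U) (lan_repr V)).

Lemma lan_pair_class a (t : LanTerm L x a) (s : LanTerm L y a) :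
  lan_pair (lan_class t) (lan_class s) = lan_class (lt_pair t s).
Proof.
  apply qclass_eq; [apply lan_equiv_equivalence|].
  apply rst_trans with (lt_pair t (lan_repr (lan_class s))).
  - apply clos_rst_map with (R' := @lan_step _ _ L x a)
      (f := fun t' => lt_pair t' (lan_repr (lan_class s))).
    + intros; apply lt_pair_step; auto using lan_step_refl.
    + apply lan_repr_class.
  - apply clos_rst_map with (R' := @lan_step _ _ L y a) (f := lt_pair t).
    + intros; apply lt_pair_step; auto using lan_step_refl.
    + apply lan_repr_class.
Qed.

Lemma lan_pair_fst a (t : LanTerm L x a) (s : LanTerm L y a) :
  ntc (fmap (Lan L) p1) a (lan_class (lt_pair t s)) = lan_class t.
Proof.
  rewrite Lan_fmap_class. unfold lt_map, lt_pair. simpl. rewrite (proj1 (psh_pair_spec _ _)).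
  symmetry. apply lan_class_step. exists (bfst (lt_obj t) (lt_obj s)). simpl. split; auto.
  symmetry. apply (proj1 (Lpair_spec _ _)).
Qed.

Lemma lan_pair_snd a (t : LanTerm L x a) (s : LanTerm L y a) :
  ntc (fmap (Lan L) p2) a (lan_class (lt_pair t s)) = lan_class s.
Proof.
  rewrite Lan_fmap_class. unfold lt_map, lt_pair. simpl. rewrite (proj2 (psh_pair_spec _ _)).
  symmetry. apply lan_class_step. exists (bsnd (lt_obj t) (lt_obj s)). simpl. split; auto.
  symmetry. apply (proj2 (Lpair_spec _ _)).
Qed.

Lemma lan_pair_eta (a : A) (Z : Lan L p a) :
  lan_pair (ntc (fmap (Lan L) p1) a Z) (ntc (fmap (Lan L) p2) a Z) = Z.
Proof.
  destruct (lan_class_surj Z) as [[m k z] ->]. rewrite !Lan_fmap_class. unfold lt_map. simpl.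
  rewrite lan_pair_class. apply lan_class_step.
  destruct (bpair_spec (idm m) (idm m)) as [D1 D2].
  exists (bpair (idm m) (idm m)). simpl. split.
  - apply (product_hom_ext (@L_bprod_spec _ _)); rewrite comp_assoc, <- fmap_comp.
    + rewrite D1, fmap_id, comp_idl, (proj1 (Lpair_spec _ _)). reflexivity.
    + rewrite D2, fmap_id, comp_idl, (proj2 (Lpair_spec _ _)). reflexivity.
  - transitivity (psh_pair (ntc p1 m z) (ntc p2 m z)); [apply psh_pair_unique; reflexivity|].
    symmetry. apply psh_pair_unique.
    + rewrite ntnat_pt, (proj1 (psh_pair_spec _ _)), <- fmap_comp_pt, D1, fmap_id_pt.
      reflexivity.
    + rewrite ntnat_pt, (proj2 (psh_pair_spec _ _)), <- fmap_comp_pt, D2, fmap_id_pt.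
      reflexivity.
Qed.

Lemma Lan_preserves_product : is_product (fmap (Lan L) p1) (fmap (Lan L) p2).
Proof.
  apply product_of_pt. intros a U V. exists (lan_pair U V). split.
  - destruct (lan_class_surj U) as [t ->], (lan_class_surj V) as [s ->].
    rewrite lan_pair_class. split; [apply lan_pair_fst | apply lan_pair_snd].
  - intros Z [E1 E2]. rewrite <- (lan_pair_eta Z), E1, E2. reflexivity.
Qed.

End BinaryProduct.

Lemma Lan_preserves_finite_products : preserves_finite_products (Lan L).
Proof.
  split.
  - apply Lan_preserves_terminal.
  - intros p x y p1 p2 H. apply Lan_preserves_product. exact H.
Qed.

End LanFiniteProducts.

Section ReflectedDependentProduct.
Context (A B : Category) (F : Functor A B) (L : Functor B A) (adj : Adjunction L F)
  (hF : fully_faithful F).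
Context (a c x : A) (f : Hom a c) (p : Hom x a) (w P0 : B) (qB : Hom w (F c))
  (pi1 : Hom P0 w) (pi2 : Hom P0 (F a)) (epsB : Hom P0 (F x))
  (Hpb : is_pullback pi1 pi2 qB (fmap F f)) (Hp : fmap F p ∘ epsB = pi2)
  (HU : forall (z : B) (r : Hom z (F c)) (Q : B) (rho1 : Hom Q z) (rho2 : Hom Q (F a))
          (e : Hom Q (F x)),
        is_pullback rho1 rho2 r (fmap F f) -> fmap F p ∘ e = rho2 ->
        exists! h : Hom z w, qB ∘ h = r /\
          forall k : Hom Q P0, pi1 ∘ k = h ∘ rho1 -> pi2 ∘ k = rho2 -> epsB ∘ k = e).

Let qA : Hom (L w) c := eps adj c ∘ fmap L qB.
Let pi2A : Hom (L P0) a := eps adj a ∘ fmap L pi2.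
Let epsA : Hom (L P0) x := eps adj x ∘ fmap L epsB.

Context (HL : is_pullback (fmap L pi1) pi2A qA f).

Lemma reflected_counit_over : p ∘ epsA = pi2A.
Proof.
  unfold epsA, pi2A. rewrite comp_assoc, eps_nat. reassoc. rewrite <- fmap_comp, Hp.
  reflexivity.
Qed.

Lemma dependent_product_endo_id (h : Hom w w) :
  qB ∘ h = qB ->
  (forall k, pi1 ∘ k = h ∘ pi1 -> pi2 ∘ k = pi2 -> epsB ∘ k = epsB) -> h = idm w.
Proof.
  intros Hq Hk. destruct (HU Hpb Hp) as [h1 [_ Hu1]].
  rewrite <- (Hu1 h (conj Hq Hk)). apply Hu1. split; [apply comp_idr|].
  intros k K1 K2.
  assert (Ek : k = idm P0).
  { apply (pullback_hom_ext Hpb); rewrite comp_idr; auto. rewrite K1, comp_idl. reflexivity. }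
  rewrite Ek. apply comp_idr.
Qed.

(* The dependent product w lies in the reflective subcategory: eta w is split by rho. *)
Lemma dependent_product_unit_retraction :
  exists rho : Hom (F (L w)) w, qB ∘ rho = fmap F qA /\ rho ∘ eta adj w = idm w.
Proof.
  assert (HFp : fmap F p ∘ fmap F epsA = fmap F pi2A)
    by (rewrite <- fmap_comp, reflected_counit_over; reflexivity).
  destruct (HU (right_adjoint_preserves_pullbacks adj HL) HFp) as [rho [[Hrq Hrk] _]].
  exists rho. split; [exact Hrq|].
  apply dependent_product_endo_id.
  - rewrite comp_assoc, Hrq. apply unit_transposeK.
  - intros k0 K1 K2.
    destruct (pullback_factor Hpb (q1 := rho ∘ fmap F (fmap L pi1)) (q2 := fmap F pi2A))
      as [k1 [K11 K12]].
    { rewrite comp_assoc, Hrq, <- fmap_comp, (proj1 HL), fmap_comp. reflexivity. }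
    assert (Hk0 : k0 = k1 ∘ eta adj P0).
    { apply (pullback_hom_ext Hpb).
      - rewrite K1, (comp_eq_precomp _ K11). reassoc. rewrite (eta_nat adj pi1). reflexivity.
      - rewrite K2, (comp_eq_precomp _ K12). unfold pi2A. symmetry. apply unit_transposeK. }
    rewrite Hk0, (comp_eq_precomp _ (Hrk k1 K11 K12)). unfold epsA. apply unit_transposeK.
Qed.

Section Factorization.
Context (z : A) (r : Hom z c) (Q : A) (rho1 : Hom Q z) (rho2 : Hom Q a) (e : Hom Q x)
  (Hpb' : is_pullback rho1 rho2 r f).

Section FromB.
Context (h0 : Hom (F z) w) (Hq0 : qB ∘ h0 = fmap F r)
  (Hk0 : forall k : Hom (F Q) P0, pi1 ∘ k = h0 ∘ fmap F rho1 -> pi2 ∘ k = fmap F rho2 ->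
           epsB ∘ k = fmap F e).

Lemma reflected_factor_over : qA ∘ (fmap L h0 ∘ counit_inv adj hF z) = r.
Proof.
  unfold qA. reassoc. rewrite fmap_comp_assoc, Hq0. apply counit_fmap_counit_inv.
Qed.

Lemma reflected_factor_counit (k : Hom Q (L P0)) :
  fmap L pi1 ∘ k = (fmap L h0 ∘ counit_inv adj hF z) ∘ rho1 -> pi2A ∘ k = rho2 ->
  epsA ∘ k = e.
Proof.
  intros K1 K2.
  destruct (pullback_factor Hpb (q1 := h0 ∘ fmap F rho1) (q2 := fmap F rho2))
    as [k0 [K01 K02]].
  { rewrite comp_assoc, Hq0, <- !fmap_comp, (proj1 Hpb'). reflexivity. }
  assert (Hk : k = fmap L k0 ∘ counit_inv adj hF Q).
  { apply (pullback_hom_ext HL).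
    - rewrite K1, fmap_comp_assoc, K01, fmap_comp. reassoc.
      rewrite (counit_inv_nat adj hF rho1). reflexivity.
    - rewrite K2. unfold pi2A. reassoc. rewrite fmap_comp_assoc, K02.
      symmetry. apply counit_fmap_counit_inv. }
  rewrite Hk. unfold epsA. reassoc. rewrite fmap_comp_assoc, (Hk0 K01 K02).
  apply counit_fmap_counit_inv.
Qed.

End FromB.

Section FromA.
Context (rho : Hom (F (L w)) w) (Hrq : qB ∘ rho = fmap F qA) (Hre : rho ∘ eta adj w = idm w).

Lemma unit_retraction_inv : eta adj w ∘ rho = idm (F (L w)).
Proof.
  apply (unit_epi (adj:=adj) hF). reassoc. rewrite Hre, comp_idr, comp_idl. reflexivity.
Qed.

Lemma retraction_transposeK (h : Hom z (L w)) :
  fmap L (rho ∘ fmap F h) ∘ counit_inv adj hF z = h.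
Proof.
  apply (F_faithful hF). rewrite fmap_comp, fmap_counit_inv, eta_nat.
  rewrite comp_assoc, unit_retraction_inv, comp_idl. reflexivity.
Qed.

Lemma retraction_transpose_spec (h : Hom z (L w)) :
  qA ∘ h = r ->
  (forall k, fmap L pi1 ∘ k = h ∘ rho1 -> pi2A ∘ k = rho2 -> epsA ∘ k = e) ->
  qB ∘ (rho ∘ fmap F h) = fmap F r /\
  forall k0, pi1 ∘ k0 = (rho ∘ fmap F h) ∘ fmap F rho1 -> pi2 ∘ k0 = fmap F rho2 ->
    epsB ∘ k0 = fmap F e.
Proof.
  intros Hq Hk. split.
  - rewrite comp_assoc, Hrq, <- fmap_comp, Hq. reflexivity.
  - intros k0 K01 K02.
    assert (K1 : fmap L pi1 ∘ (fmap L k0 ∘ counit_inv adj hF Q) = h ∘ rho1).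
    { rewrite fmap_comp_assoc, K01, fmap_comp. reassoc.
      rewrite <- (counit_inv_nat adj hF rho1), comp_assoc, retraction_transposeK.
      reflexivity. }
    assert (K2 : pi2A ∘ (fmap L k0 ∘ counit_inv adj hF Q) = rho2).
    { unfold pi2A. reassoc. rewrite fmap_comp_assoc, K02. apply counit_fmap_counit_inv. }
    apply (counit_transpose_inj (adj:=adj)). rewrite <- eps_nat, <- (Hk _ K1 K2).
    unfold epsA. reassoc. rewrite counit_inv_counit, comp_idr, fmap_comp. reflexivity.
Qed.

End FromA.
End Factorization.

Lemma reflected_dependent_product : has_dependent_product f p.
Proof.
  destruct dependent_product_unit_retraction as [rho [Hrq Hre]].
  exists (L w), qA, (L P0), (fmap L pi1), pi2A, epsA.
  split; [exact HL|]. split; [exact reflected_counit_over|].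
  intros z r Q rho1 rho2 e Hpb' He.
  assert (HFe : fmap F p ∘ fmap F e = fmap F rho2) by (rewrite <- fmap_comp, He; auto).
  destruct (HU (right_adjoint_preserves_pullbacks adj Hpb') HFe) as [h0 [[Hq0 Hk0] Hun0]].
  exists (fmap L h0 ∘ counit_inv adj hF z). split; [split|].
  - exact (reflected_factor_over Hq0).
  - intros k. exact (reflected_factor_counit Hpb' Hq0 Hk0 (k := k)).
  - intros h [Hq Hk]. rewrite <- (retraction_transposeK Hre h).
    do 2 f_equal. apply Hun0. exact (retraction_transpose_spec Hrq Hre Hq Hk).
Qed.

End ReflectedDependentProduct.

Section LeftAdjointOnRepresentables.
Context (A B : Category) (L : Functor B A) (L' : Functor (Psh B) (Psh A))
  (ad : Adjunction L' (restr L)).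

Lemma restr_fmap_pt (X Y : Psh A) (m : @Hom (Psh A) X Y) (b : B) (y : X (L b)) :
  ntc (fmap (restr L) m) b y = ntc m (L b) y.
Proof. reflexivity. Qed.

Definition yo_unit_elt (b : B) : L' (yo b) (L b) := ntc (adj_unit ad (yo b)) b (idm b).

Definition yo_to_lan (b : B) : @Hom (Psh A) (yo (L b)) (L' (yo b)) :=
  yo_elt (L' (yo b)) (L b) (yo_unit_elt b).

Definition lan_to_yo (b : B) : @Hom (Psh A) (L' (yo b)) (yo (L b)) :=
  transpose ad (yo_elt (restr L (yo (L b))) b (idm (L b))).

Lemma transpose_yo_elt (X : Psh A) (b : B) (x : X (L b)) :
  transpose ad (yo_elt (restr L X) b x) ∘ yo_to_lan b = yo_elt X (L b) x.
Proof.
  apply yoneda_ext. unfold transpose. rewrite !nt_comp_pt. unfold yo_to_lan.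
  rewrite !yo_elt_pt, !fmap_id_pt.
  pose proof (nt_eq_pt (adj_unit_nat ad (yo_elt (restr L X) b x)) (idm b)) as U.
  rewrite !nt_comp_pt, restr_fmap_pt, yo_elt_pt, fmap_id_pt in U. fold (yo_unit_elt b) in U.
  rewrite U.
  pose proof (nt_eq_pt (adj_tri2 ad X) x (c:=b)) as T.
  rewrite nt_comp_pt, restr_fmap_pt in T. exact T.
Qed.

Lemma yo_to_lan_nat (b b' : B) (g : @Hom B b b') :
  fmap L' (yo_map g) ∘ yo_to_lan b = yo_to_lan b' ∘ yo_map (fmap L g).
Proof.
  apply yoneda_ext. rewrite !nt_comp_pt. unfold yo_to_lan.
  rewrite !yo_elt_pt, fmap_id_pt, yo_map_pt, comp_idr.
  pose proof (nt_eq_pt (adj_unit_nat ad (yo_map g)) (idm b)) as U.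
  rewrite !nt_comp_pt, restr_fmap_pt, yo_map_pt, comp_idr in U. fold (yo_unit_elt b) in U.
  rewrite U.
  pose proof (ntnat_pt (adj_unit ad (yo b')) (a:=b') (b:=b) g (idm b')) as N.
  change (ntc (adj_unit ad (yo b')) b (idm b' ∘ g) =
          @fmap _ _ (L' (yo b')) (L b') (L b) (fmap L g) (yo_unit_elt b')) in N.
  rewrite comp_idl in N. exact N.
Qed.

Lemma yo_to_lanK (b : B) : lan_to_yo b ∘ yo_to_lan b = idm (yo (L b)).
Proof.
  unfold lan_to_yo. rewrite transpose_yo_elt. apply psh_ext. intros d g.
  rewrite yo_elt_pt, nt_id_pt. apply comp_idl.
Qed.

Lemma left_adjoint_hom_ext (Y : Psh B) (Z : Psh A) (m1 m2 : @Hom (Psh A) (L' Y) Z) :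
  fmap (restr L) m1 ∘ adj_unit ad Y = fmap (restr L) m2 ∘ adj_unit ad Y -> m1 = m2.
Proof.
  assert (Hm : forall m : @Hom (Psh A) (L' Y) Z,
             m = adj_counit ad Z ∘ fmap L' (fmap (restr L) m ∘ adj_unit ad Y)).
  { intro m. rewrite fmap_comp, comp_assoc, <- adj_counit_nat. reassoc.
    rewrite adj_tri1, comp_idr. reflexivity. }
  intros E. rewrite (Hm m1), (Hm m2), E. reflexivity.
Qed.

Lemma lan_to_yo_unit_elt (b : B) : ntc (lan_to_yo b) (L b) (yo_unit_elt b) = idm (L b).
Proof.
  pose proof (nt_eq_pt (yo_to_lanK b) (idm (L b))) as E.
  rewrite nt_comp_pt, nt_id_pt in E. unfold yo_to_lan in E.
  rewrite yo_elt_pt, fmap_id_pt in E. exact E.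
Qed.

Lemma lan_to_yoK (b : B) : yo_to_lan b ∘ lan_to_yo b = idm (L' (yo b)).
Proof.
  apply left_adjoint_hom_ext. apply yoneda_ext.
  change (ntc (yo_to_lan b) (L b) (ntc (lan_to_yo b) (L b) (yo_unit_elt b)) = yo_unit_elt b).
  rewrite lan_to_yo_unit_elt. unfold yo_to_lan. rewrite yo_elt_pt. apply fmap_id_pt.
Qed.

End LeftAdjointOnRepresentables.

Section RestrictedYonedaSquare.
Context (A B : Category) (F : Functor A B) (L : Functor B A) (adj : Adjunction L F).
Context (w P0 : B) (a c : A) (pi1 : Hom P0 w) (pi2 : Hom P0 (F a)) (qB : Hom w (F c))
  (f : Hom a c) (H : is_pullback pi1 pi2 qB (fmap F f)).

(* The square of representables, with the corners yo (F a), yo (F c) replaced by the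
   isomorphic presheaves restr L (yo a), restr L (yo c). *)
Let pi2' := yo_elt (restr L (yo a)) P0 (eps adj a ∘ fmap L pi2).
Let qB' := yo_elt (restr L (yo c)) w (eps adj c ∘ fmap L qB).

Lemma restr_yo_square_comm : qB' ∘ yo_map pi1 = fmap (restr L) (yo_map f) ∘ pi2'.
Proof.
  assert (Hc : (eps adj c ∘ fmap L qB) ∘ fmap L pi1 = f ∘ (eps adj a ∘ fmap L pi2)).
  { reassoc. rewrite <- fmap_comp, (proj1 H), fmap_comp, !comp_assoc, eps_nat.
    reflexivity. }
  apply psh_ext. intros b g. rewrite !nt_comp_pt. simpl.
  change ((eps adj c ∘ fmap L qB) ∘ fmap L (pi1 ∘ g) =
          f ∘ ((eps adj a ∘ fmap L pi2) ∘ fmap L g)).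
  rewrite fmap_comp, comp_assoc, Hc. reassoc. reflexivity.
Qed.

Section Factor.
Context (X : Psh B) (m1 : @Hom (Psh B) X (yo w)) (m2 : @Hom (Psh B) X (restr L (yo a)))
  (E : qB' ∘ m1 = fmap (restr L) (yo_map f) ∘ m2).

Lemma restr_yo_factor_pt (b : B) (z : X b) :
  exists k : Hom b P0, pi1 ∘ k = ntc m1 b z /\ pi2 ∘ k = fmap F (ntc m2 b z) ∘ eta adj b.
Proof.
  assert (Ez : (eps adj c ∘ fmap L qB) ∘ fmap L (ntc m1 b z) = f ∘ ntc m2 b z)
    by exact (nt_eq_pt E z).
  apply (pullback_factor H). apply (counit_transpose_inj (adj:=adj)).
  transitivity (f ∘ ntc m2 b z).
  - rewrite fmap_comp, comp_assoc. exact Ez.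
  - rewrite (fmap_comp_assoc (G:=F)). symmetry. exact (counit_transposeK adj _).
Qed.

Definition restr_yo_factor : @Hom (Psh B) X (yo P0).
Proof.
  unshelve refine (@Build_NatTrans (op B) TypeCat X (yo P0)
                     (fun b z => witness (restr_yo_factor_pt z)) _).
  intros b b' g. apply functional_extensionality; intro z.
  change (witness (restr_yo_factor_pt (@fmap _ _ X b b' g z)) =
          witness (restr_yo_factor_pt z) ∘ g).
  destruct (witness_spec (restr_yo_factor_pt z)) as [K1 K2].
  destruct (witness_spec (restr_yo_factor_pt (@fmap _ _ X b b' g z))) as [K1' K2'].
  apply (pullback_hom_ext H).
  - rewrite K1', comp_assoc, K1. exact (ntnat_pt m1 g z).
  - rewrite K2', comp_assoc, K2, (ntnat_pt m2 g z). simpl.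
    rewrite fmap_comp. reassoc. rewrite (eta_nat adj g). reflexivity.
Defined.

Lemma restr_yo_factor_spec :
  yo_map pi1 ∘ restr_yo_factor = m1 /\ pi2' ∘ restr_yo_factor = m2.
Proof.
  split; apply psh_ext; intros b z; rewrite nt_comp_pt; simpl;
    destruct (witness_spec (restr_yo_factor_pt z)) as [K1 K2].
  - exact K1.
  - change ((eps adj a ∘ fmap L pi2) ∘ fmap L (witness (restr_yo_factor_pt z)) =
            ntc m2 b z).
    reassoc. rewrite <- fmap_comp, K2. exact (counit_transposeK adj _).
Qed.

End Factor.

Lemma restr_yo_pullback : is_pullback (yo_map pi1) pi2' qB' (fmap (restr L) (yo_map f)).
Proof.
  apply is_pullback_intro.
  - exact restr_yo_square_comm.
  - intros X m1 m2 E. exists (restr_yo_factor E). exact (restr_yo_factor_spec E).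
  - intros X k k' K1 K2. apply psh_ext. intros b z.
    pose proof (nt_eq_pt K1 z) as E1. pose proof (nt_eq_pt K2 z) as E2.
    rewrite !nt_comp_pt in E1, E2. simpl in E1, E2.
    change ((eps adj a ∘ fmap L pi2) ∘ fmap L (ntc k b z) =
            (eps adj a ∘ fmap L pi2) ∘ fmap L (ntc k' b z)) in E2.
    rewrite <- !comp_assoc, <- !fmap_comp in E2.
    apply (pullback_hom_ext H); auto. apply (counit_transpose_inj E2).
Qed.

End RestrictedYonedaSquare.

Lemma locally_connected_lcc (A B : Category) (F : Functor A B) (L : Functor B A)
  (adj : Adjunction L F) (hF : fully_faithful F) (hA : finitely_complete A)
  (hBlcc : locally_cartesian_closed B) :
  locally_connected (restr L) -> locally_cartesian_closed A.
Proof.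
  intros [L' [ad SF]]. split; [exact (proj2 hA)|]. intros a c x f p.
  destruct (proj2 hBlcc (F a) (F c) (F x) (fmap F f) (fmap F p))
    as [w [qB [P0 [pi1 [pi2 [epsB [Hpb [Hp HU]]]]]]]].
  apply (reflected_dependent_product (adj:=adj) hF Hpb Hp HU).
  apply yo_reflects_pullbacks.
  pose proof (SF _ _ _ _ _ _ _ (yo_map f) (restr_yo_pullback adj Hpb)) as H.
  refine (is_pullback_iso (lan_to_yoK ad P0) (yo_to_lanK ad P0) (lan_to_yoK ad w)
            (yo_to_lanK ad w) _ _ _ H).
  - symmetry. apply yo_to_lan_nat.
  - symmetry. apply transpose_yo_elt.
  - symmetry. apply transpose_yo_elt.
Qed.

#[universes(polymorphic)]
Theorem mainTheorem2@{i j jp | i <= j, Set < j, j < jp +}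
  (A B : Category@{i i})
  (F : Functor A B) (L : Functor B A) (adjLF : Adjunction L F)
  (hA : finitely_complete A) (hB : finitely_complete B)
  (hF : fully_faithful F) (hL : preserves_finite_products L)
  (hBlcc : locally_cartesian_closed B) (hAlcc : ~ locally_cartesian_closed A) :
  let Lstar : Functor (Psh@{i j jp} A) (Psh@{i j jp} B) := restr@{i j jp} L in
  exists Lst : Functor (Psh@{i j jp} B) (Psh@{i j jp} A),
    inhabited (Adjunction Lstar Lst) /\
    essential@{jp j jp j} Lstar /\
    local@{jp j jp j} Lstar Lst /\
    ~ locally_connected@{jp j jp j} Lstar /\
    (exists Lsh : Functor (Psh@{i j jp} B) (Psh@{i j jp} A),
        inhabited (Adjunction Lsh Lstar) /\ preserves_finite_products Lsh).
Proof.
  intros Lstar. exists (restr F).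
  split; [constructor; exact (restr_adj adjLF)|].
  split; [exists (Lan L); constructor; apply lan_adj|].
  split.
  { split; [exact (restr_fully_faithful adjLF hF)|].
    exists (Ran F). constructor. apply restr_ran_adj. }
  split.
  - intro Hlc. exact (hAlcc (locally_connected_lcc adjLF hF hA hBlcc Hlc)).
  - exists (Lan L). split; [constructor; apply lan_adj|].
    exact (Lan_preserves_finite_products hL hB).
Qed.
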